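(* Let $n\ge2$, let $T=(n;\sigma,\delta,\tau)$ with $\sigma,\delta,\tau\in\mathbb{R}$, $\tau\ne0$ and $\sigma=-\tau$ (a real shifted skew-symmetric tridiagonal Toeplitz matrix). Let $\varepsilon\in\mathbb{R}$ and let $E=(n;-e_1,e_0,e_1)$ with $e_0,e_1\in\mathbb{R}$ be such that $\tau+\varepsilon e_1$ is nonzero and has the same sign as $\tau$. Then for each $h=1,\dots,n$ the unit eigenvector $\widetilde x_h$ of $T$ and the corresponding unit eigenvector $\widetilde x_h^\varepsilon$ of $T+\varepsilon E$ satisfy $\cos\theta_{\widetilde x_h,\widetilde x_h^\varepsilon}=1$; i.e. the eigenvectors are perfectly conditioned with respect to structured perturbations preserving skew-symmetry and the signs of the off-diagonals.
   Context: $(n;\sigma,\delta,\tau)$ denotes the $n\times n$ tridiagonal Toeplitz matrix with diagonal $\delta$, superdiagonal $\tau$, subdiagonal $\sigma$. For $\sigma\tau\ne0$, the eigenvector associated with $\lambda_h=\delta+2\sqrt{\sigma\tau}\cos\frac{h\pi}{n+1}$ has components $(\sqrt{\sigma/\tau})^k\sin\frac{hk\pi}{n+1}$, $k=1,\dots,n$. For unit vectors $x,x'$, $\cos\theta_{x,x'}=|x^Hx'|$. *)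

From HB Require Import structures.
From mathcomp Require Import all_boot all_order all_algebra.
From mathcomp Require Import complex.
From mathcomp Require Import all_classical all_reals all_analysis.
Set Implicit Arguments. Unset Strict Implicit. Unset Printing Implicit Defensive.
Import Order.TTheory GRing.Theory Num.Theory.
Local Open Scope ring_scope.
Local Open Scope complex_scope.

Definition tridiag (C : ringType) (n : nat) (s d t : C) : 'M[C]_n :=
  \matrix_(i < n, j < n)
    if i == j then d
    else if j == i.+1 :> nat then t
    else if i == j.+1 :> nat then s
    else 0.

Definition adjC (R : rcfType) (m n : nat) (A : 'M[R[i]]_(m, n)) : 'M[R[i]]_(n, m) :=
  (map_mx (@Num.conj_op _) A)^T.

Definition hdot (R : rcfType) (n : nat) (x y : 'cV[R[i]]_n) : R[i] :=
  (adjC x *m y) 0 0.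

Definition unit_vec (R : rcfType) (n : nat) (x : 'cV[R[i]]_n) : Prop :=
  hdot x x = 1.

(* cos theta_{x,x'} = |x^H x'| for unit vectors x, x' *)
Definition cos_angle (R : rcfType) (n : nat) (x y : 'cV[R[i]]_n) : R[i] :=
  `| hdot x y |.

Definition eigvec (R : rcfType) (n : nat) (A : 'M[R[i]]_n) (lam : R[i])
  (x : 'cV[R[i]]_n) : Prop :=
  x != 0 /\ A *m x = lam *: x.

(* lambda_h = d + 2 sqrt(s t) cos(h pi/(n+1)), principal square root
   (sqrtC: the root with argument in [0, pi)). *)
Definition tt_eigval (R : realType) (n : nat) (s d t : R[i]) (h : nat) : R[i] :=
  d + 2%:R * sqrtC (s * t) * (cos (h%:R * pi / (n.+1)%:R))%:C.

(* Since sigma = -tau, T = delta + tau K with K = (n; -1, 0, 1), and the eigenvalue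
   formula gives (lambda_h - delta) / tau = sg(tau) 2i cos(h pi/(n+1)), which only
   depends on the sign of tau.  The same holds for T + eps E, a skew tridiagonal
   Toeplitz matrix with superdiagonal tau + eps e1 of the sign of tau.  Hence both
   eigenvectors are eigenvectors of K for one and the same eigenvalue.  The
   three-term recurrence shows that an eigenvector of a tridiagonal matrix with
   nonzero superdiagonal is determined by its first coordinate, so the perturbed
   eigenvector is c x_h, and |c| = 1 because both vectors are unit vectors. *)

From HB Require Import structures.
From mathcomp Require Import all_boot all_order all_algebra.
From mathcomp Require Import complex.
From mathcomp Require Import all_classical all_reals all_analysis.
From mathcomp Require Import ring zify.
Import Order.TTheory GRing.Theory Num.Theory.
Local Open Scope ring_scope.
Local Open Scope complex_scope.

Set Implicit Arguments.
Unset Strict Implicit.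
Unset Printing Implicit Defensive.

Section TridiagRows.
Variables (C : comNzRingType) (n : nat).

(* One-based coordinates of y padded by zeros: pad y 0 = pad y n.+1 = 0 are
   the boundary values of the three-term recurrence. *)
Definition pad (y : 'cV[C]_n) (k : nat) : C :=
  if k is k'.+1 then (if insub k' is Some i then y i 0 else 0) else 0.
#[global] Arguments pad : simpl never.

Lemma pad_ord (y : 'cV[C]_n) (i : 'I_n) : pad y i.+1 = y i 0.
Proof. by rewrite /pad valK. Qed.

Lemma pad_out (y : 'cV[C]_n) (k : nat) : (n <= k)%N -> pad y k.+1 = 0.
Proof. by move=> hk; rewrite /pad insubF // ltnNge hk. Qed.

Lemma sum_pad (y : 'cV[C]_n) (k : nat) :
  \sum_(j < n) ((j.+1 == k)%N)%:R * y j 0 = pad y k.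
Proof.
case: k => [|k]; first by rewrite big1 // => j _; rewrite mul0r.
have [hk | hk] := ltnP k n; last first.
  rewrite pad_out // big1 // => j _; rewrite eqSS.
  by case: eqP => [ejk | _]; [move: (ltn_ord j); rewrite ejk ltnNge hk | rewrite mul0r].
rewrite -[k]/(val (Ordinal hk)) pad_ord (bigD1 (Ordinal hk)) //= eqxx mul1r.
rewrite big1 ?addr0 // => j hj; rewrite eqSS.
by case: eqP => [ejk | _]; [case/eqP: hj; apply: val_inj | rewrite mul0r].
Qed.

Lemma tridiag_mulmx (s d t : C) (y : 'cV[C]_n) (i : 'I_n) :
  (tridiag n s d t *m y) i 0 = s * pad y i + d * pad y i.+1 + t * pad y i.+2.
Proof.
rewrite -!sum_pad !mulr_sumr -!big_split /= mxE; apply: eq_bigr => j _.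
rewrite !mxE !eqSS -[i == j]/(i == j :> nat).
by do ![case: eqP => ? /=]; try (exfalso; lia); ring.
Qed.

Lemma padB (a b : C) (y z : 'cV[C]_n) (k : nat) :
  pad (a *: y - b *: z) k = a * pad y k - b * pad z k.
Proof.
case: k => [|k]; rewrite /pad ?mulr0 ?subrr //.
by case: insub => [i|]; rewrite ?mxE // !mulr0 subrr.
Qed.

End TridiagRows.

Lemma tridiagD (C : nzRingType) (n : nat) (s d t s' d' t' : C) :
  tridiag n s d t + tridiag n s' d' t' = tridiag n (s + s') (d + d') (t + t').
Proof. by apply/matrixP => i j; rewrite !mxE; do !case: ifP => _; rewrite ?addr0. Qed.

Lemma tridiagZ (C : nzRingType) (n : nat) (c s d t : C) :
  c *: tridiag n s d t = tridiag n (c * s) (c * d) (c * t).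
Proof. by apply/matrixP => i j; rewrite !mxE; do !case: ifP => _; rewrite ?mulr0. Qed.

Lemma tridiag_skew (C : nzRingType) (n : nat) (d t : C) :
  tridiag n (- t) d t = d%:M + t *: tridiag n (-1) 0 1.
Proof.
apply/matrixP => i j; rewrite !mxE.
case: (i == j) => /=; do ?case: ifP => _.
all: rewrite ?mulr1n ?mulr0n ?mulr0 ?mulr1 ?mulrN1 ?addr0 ?add0r //.
Qed.

Section TridiagEigen.
Variables (F : fieldType) (n : nat) (s d t lam : F).
Hypothesis t_neq0 : t != 0.

Lemma tridiag_eigen_pad1_eq0 (y : 'cV[F]_n) :
  tridiag n s d t *m y = lam *: y -> pad y 1 = 0 -> y = 0.
Proof.
move=> ey y1.
have row (i : 'I_n) : s * pad y i + d * pad y i.+1 + t * pad y i.+2 = lam * pad y i.+1.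
  by rewrite -tridiag_mulmx ey mxE pad_ord.
have pad_eq0 k : pad y k = 0 /\ pad y k.+1 = 0.
  elim: k => [|k [yk yk1]] //; split=> //.
  have [hk | hk] := ltnP k n; last exact/pad_out/leqW.
  have := row (Ordinal hk); rewrite /= yk yk1 !mulr0 !add0r => /eqP.
  by rewrite mulf_eq0 (negbTE t_neq0) => /eqP.
by apply/matrixP => i j; rewrite ord1 mxE -pad_ord; case: (pad_eq0 i.+1).
Qed.

Lemma tridiag_eigen_colinear (y z : 'cV[F]_n) :
  tridiag n s d t *m y = lam *: y -> tridiag n s d t *m z = lam *: z ->
  pad z 1 *: y = pad y 1 *: z.
Proof.
move=> ey ez; apply/eqP; rewrite -subr_eq0; apply/eqP.
apply: tridiag_eigen_pad1_eq0; last by rewrite padB mulrC subrr.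
by rewrite mulmxBr -!scalemxAr ey ez scalerBr !scalerA !(mulrC lam).
Qed.

End TridiagEigen.

Lemma eigen_scalar_shift (F : fieldType) (n : nat) (B : 'M[F]_n) (d t lam : F)
    (y : 'cV[F]_n) :
  t != 0 -> (d%:M + t *: B) *m y = lam *: y -> B *m y = ((lam - d) / t) *: y.
Proof.
move=> t_neq0; rewrite mulmxDl mul_scalar_mx -scalemxAl => e.
have tBy : t *: (B *m y) = (lam - d) *: y by rewrite scalerBl -e addrC addKr.
by rewrite mulrC -scalerA -tBy scalerA mulVf // scale1r.
Qed.

Lemma sqrtC_Nsqr (R : rcfType) (t : R) :
  sqrtC (- t%:C ^+ 2) = `|t|%:C * sqrtC (-1) :> R[i].
Proof.
have -> : - t%:C ^+ 2 = `|t|%:C ^+ 2 * -1 :> R[i].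
  by rewrite mulrN1 -!rmorphXn real_normK ?num_real.
by rewrite rootCMl ?sqrCK ?exprn_ge0 // ler0c.
Qed.

Definition normalized_eigval (R : realType) (n : nat) (t : R) (h : nat) : R[i] :=
  (Num.sg t)%:C * (2%:R * sqrtC (-1) * (cos (h%:R * pi / n.+1%:R))%:C).

Lemma tt_eigval_skew (R : realType) (n : nat) (d t : R) (h : nat) :
  (tt_eigval n (- t)%:C d%:C t%:C h - d%:C) / t%:C = normalized_eigval n t h.
Proof.
have norm_div : `|t| / t = Num.sg t.
  have [-> | t_neq0] := eqVneq t 0; first by rewrite normr0 mul0r sgr0.
  by rewrite normrEsg mulfK.
rewrite /tt_eigval addrAC subrr add0r rmorphN mulNr -expr2 sqrtC_Nsqr.
rewrite /normalized_eigval -norm_div rmorphM fmorphV /=; ring.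
Qed.

Lemma skew_tridiag_eigvec (R : realType) (n : nat) (d t : R) (h : nat)
    (y : 'cV[R[i]]_n) :
  t != 0 ->
  tridiag n (- t)%:C d%:C t%:C *m y = tt_eigval n (- t)%:C d%:C t%:C h *: y ->
  tridiag n (-1) 0 1 *m y = normalized_eigval n t h *: y.
Proof.
move=> t_neq0; rewrite -(tt_eigval_skew n d t h) rmorphN tridiag_skew.
by apply: eigen_scalar_shift; rewrite (inj_eq (@complexI _)).
Qed.

Lemma hdot_sum (R : rcfType) (n : nat) (x y : 'cV[R[i]]_n) :
  hdot x y = \sum_j (x j 0)^* * y j 0.
Proof. by rewrite /hdot /adjC !mxE; apply: eq_bigr => j _; rewrite !mxE. Qed.

Lemma hdotZl (R : rcfType) (n : nat) (c : R[i]) (x y : 'cV[R[i]]_n) :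
  hdot (c *: x) y = c^* * hdot x y.
Proof.
by rewrite !hdot_sum mulr_sumr; apply: eq_bigr => j _; rewrite mxE rmorphM mulrA.
Qed.

Lemma hdotZr (R : rcfType) (n : nat) (c : R[i]) (x y : 'cV[R[i]]_n) :
  hdot x (c *: y) = c * hdot x y.
Proof.
by rewrite !hdot_sum mulr_sumr; apply: eq_bigr => j _; rewrite mxE mulrCA.
Qed.

Lemma cos_angle_unit_scale (R : rcfType) (n : nat) (c : R[i]) (x : 'cV[R[i]]_n) :
  unit_vec x -> unit_vec (c *: x) -> cos_angle x (c *: x) = 1.
Proof.
rewrite /unit_vec /cos_angle hdotZl hdotZr => -> /eqP.
rewrite !mulr1 -normCKC => /eqP c1.
by rewrite -[LHS]sqrCK // c1 sqrtC1.
Qed.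

Theorem corollary2 (R : realType) (n : nat) (sigma delta tau eps e0 e1 : R)
  (hn : (2 <= n)%N) (htau : tau != 0) (hsig : sigma = - tau)
  (hpert : tau + eps * e1 != 0)
  (hsign : Num.sg (tau + eps * e1) = Num.sg tau)
  (h : nat) (h1 : (1 <= h)%N) (h2 : (h <= n)%N)
  (x xe : 'cV[R[i]]_n) :
  let T := tridiag n sigma%:C delta%:C tau%:C in
  let E := tridiag n (- e1)%:C e0%:C e1%:C in
  let Te := T + eps%:C *: E in
  unit_vec x ->
  eigvec T (tt_eigval n sigma%:C delta%:C tau%:C h) x ->
  unit_vec xe ->
  eigvec Te (tt_eigval n (sigma + eps * (- e1))%:C (delta + eps * e0)%:C
                         (tau + eps * e1)%:C h) xe ->
  cos_angle x xe = 1.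
Proof.
move=> T E Te ux [x_neq0 ex] uxe [_ exe].
have skew_pert : sigma + eps * - e1 = - (tau + eps * e1) by rewrite hsig mulrN opprD.
move: ex; rewrite /T hsig => /(skew_tridiag_eigvec htau) ex.
move: exe; rewrite /Te /T /E tridiagZ tridiagD -!rmorphM -!rmorphD skew_pert.
move=> /(skew_tridiag_eigvec hpert) exe.
have same_eigval : normalized_eigval n (tau + eps * e1) h = normalized_eigval n tau h.
  by rewrite /normalized_eigval hsign.
rewrite same_eigval in exe.
have x1_neq0 : pad x 1 != 0.
  by apply: contraNneq x_neq0 => /(tridiag_eigen_pad1_eq0 (oner_neq0 _) ex) ->.
have xeE : xe = (pad xe 1 / pad x 1) *: x.
  rewrite mulrC -scalerA (tridiag_eigen_colinear (oner_neq0 _) ex exe).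
  by rewrite scalerA mulVf ?scale1r.
by rewrite xeE in uxe *; apply: cos_angle_unit_scale.
Qed.
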